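(* Every Boolean metric space $X$ over a Boolean ring $B$ is isometric to a metrizable subset of a $B$-module equipped with its modular metric. Furthermore, for any fixed $x_{0}\in X$ there exist a $B$-module $M$, a metrizable subset $S\subseteq M$ with $0\in S$, and an isometry $g:X\to S$ (for the modular metric on $S$) with $g(x_{0})=0$.
   Context: $B$ is a Boolean ring ($a\vee b=a+b+ab$, $a\le b\iff ab=a$, $\bar a=1+a$); $B$ is a regular ring whose idempotents are all its elements. A Boolean metric space over $B$: set $X$ with $d:X\times X\to B$, $d(x,y)=0\iff x=y$, symmetric, $d(x,z)\le d(x,y)\vee d(y,z)$. An isometry is a bijection $f$ with $d(f(x),f(y))=d(x,y)$. For a regular ring $A$ and an $A$-module $M$, a subset $S\subseteq M$ is metrizable if for all $x,y\in S$ the annihilator ideal $\mathrm{Ann}(x-y)=\{a\in A: a(x-y)=0\}$ is principal; it then has a unique idempotent generator $a_{xy}$, and the modular metric on $S$ is $d(x,y)=1-a_{xy}$ (the complement of $a_{xy}$ in the Boolean ring of idempotents of $A$). *)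

From HB Require Import structures.
From mathcomp Require Import all_boot all_order all_algebra.
From Stdlib Require Import ClassicalEpsilon.
Set Implicit Arguments. Unset Strict Implicit. Unset Printing Implicit Defensive.
Import GRing.Theory.
Local Open Scope ring_scope.

Definition boolean_ring (B : comPzRingType) : Prop := forall a : B, a * a = a.

Definition bjoin (B : comPzRingType) (a b : B) : B := a + b + a * b.
Definition ble (B : comPzRingType) (a b : B) : Prop := a * b = a.

Definition boolean_metric (B : comPzRingType) (X : Type) (d : X -> X -> B) : Prop :=
  (forall x y, d x y = 0 <-> x = y) /\
  (forall x y, d x y = d y x) /\
  (forall x y z, ble (d x z) (bjoin (d x y) (d y z))).

Definition ann (B : comPzRingType) (M : lmodType B) (m : M) : B -> Prop :=
  fun c => c *: m = 0.

Definition ann_gen (B : comPzRingType) (M : lmodType B) (x y : M) (a : B) : Prop :=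
  a * a = a /\ (forall c, ann (x - y) c <-> exists r, c = r * a).

Definition metrizable (B : comPzRingType) (M : lmodType B) (S : M -> Prop) : Prop :=
  forall x y, S x -> S y -> exists a : B, ann_gen x y a.

(* The (idempotent) generator a_xy, chosen by epsilon (unique when it exists). *)
Definition ann_generator (B : comPzRingType) (M : lmodType B) (x y : M) : B :=
  epsilon (inhabits (0 : B)) (fun a => ann_gen x y a).

Definition modular_metric (B : comPzRingType) (M : lmodType B) (x y : M) : B :=
  1 - ann_generator x y.

Definition isometry_onto_modular (B : comPzRingType) (X : Type) (d : X -> X -> B)
  (M : lmodType B) (S : M -> Prop) (g : X -> M) : Prop :=
  (forall x, S (g x)) /\
  (forall x y, g x = g y -> x = y) /\
  (forall m, S m -> exists x, g x = m) /\
  (forall x y, modular_metric (g x) (g y) = d x y).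

From HB Require Import structures.
From mathcomp Require Import all_boot all_order all_algebra ring.
From mathcomp Require Import boolp functions.
From Stdlib Require Import ClassicalEpsilon.
Set Implicit Arguments. Unset Strict Implicit. Unset Printing Implicit Defensive.
Import GRing.Theory.
Local Open Scope ring_scope.

(* Proof idea: a Kuratowski-style embedding.  Given a Boolean metric d on X
   and any h : X -> B, send x to the function  z |-> d(x,z) - h(z)  in the
   B-module B^X of all functions X -> B (pointwise structure, from
   mathcomp-classical).  The triangle inequality, read in the Boolean ring,
   says that the symmetric difference d(x,z) + d(y,z) lies below d(x,y);
   hence the difference of the images of x and y is annihilated exactly by
   the c with c * d(x,y) = 0, i.e. Ann = (1 - d(x,y))B.  So the image is a
   metrizable subset whose modular metric is d(x,y). *)

Section BooleanRing.
Variables (B : comPzRingType) (hB : boolean_ring B).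

Lemma boolean_addxx (a : B) : a + a = 0.
Proof.
have := hB (a + a); rewrite mulrDl !mulrDr !hB => /eqP.
by rewrite -subr_eq0 addrK => /eqP.
Qed.

Lemma boolean_oppr (a : B) : - a = a.
Proof. by apply/eqP; rewrite -subr_eq0 -opprD boolean_addxx oppr0. Qed.

Lemma boolean_sym_diff_le (a b p : B) :
  ble a (bjoin p b) -> ble b (bjoin p a) -> ble (a + b) p.
Proof.
rewrite /ble /bjoin => ha hb.
have -> : (a + b) * p = a * (p + b + p * b) + b * (p + a + p * a)
                        - (a * b + a * b * p + (a * b + a * b * p)) by ring.
by rewrite ha hb boolean_addxx subr0.
Qed.

End BooleanRing.

Section IdempotentGenerators.
Variables (B : comPzRingType) (M : lmodType B).

Lemma ann_gen_compl (u v : M) (p : B) :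
  p * p = p -> (forall c, ann (u - v) c <-> c * p = 0) -> ann_gen u v (1 - p).
Proof.
move=> idp annE; have compl_p : (1 - p) * p = 0 by rewrite mulrBl mul1r idp subrr.
split; first by rewrite mulrBr mulr1 compl_p subr0.
move=> c; rewrite annE; split.
- by move=> cp0; exists c; rewrite mulrBr mulr1 cp0 subr0.
- by move=> [r ->]; rewrite -mulrA compl_p mulr0.
Qed.

Lemma ann_gen_unique (u v : M) (a a' : B) :
  ann_gen u v a -> ann_gen u v a' -> a = a'.
Proof.
move=> [ida annE] [ida' annE'].
have [r Er] : exists r, a = r * a' by apply/annE'/annE; exists 1; rewrite mul1r.
have [s Es] : exists s, a' = s * a by apply/annE/annE'; exists 1; rewrite mul1r.
have aa' : a * a' = a by rewrite {1}Er -mulrA ida' -Er.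
by rewrite -aa' mulrC {1}Es -mulrA ida -Es.
Qed.

Lemma modular_metricE (u v : M) (a : B) :
  ann_gen u v a -> modular_metric u v = 1 - a.
Proof.
move=> gen_a; rewrite /modular_metric /ann_generator.
by rewrite (ann_gen_unique (epsilon_spec (inhabits 0) _ (ex_intro _ a gen_a)) gen_a).
Qed.

End IdempotentGenerators.

Section Embedding.
Variables (B : comPzRingType) (X : Type) (d : X -> X -> B).
Hypotheses (hB : boolean_ring B) (hd : boolean_metric d).

Definition kuratowski (h : X -> B) (x : X) : X -> B^o := fun z => d x z - h z.

Definition kuratowski_image (h : X -> B) : (X -> B^o) -> Prop :=
  fun m => exists x, kuratowski h x = m.

Lemma metric_self (x : X) : d x x = 0.
Proof. by case: hd => dE _; apply/dE. Qed.

Lemma metric_sym_diff_le (x y z : X) : ble (d x z - d y z) (d x y).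
Proof.
case: hd => _ [dC dT]; rewrite (boolean_oppr hB).
by apply: (boolean_sym_diff_le hB); [exact: dT | rewrite [d x y]dC; exact: dT].
Qed.

Lemma kuratowski_sub (h : X -> B) (x y : X) :
  kuratowski h x - kuratowski h y = fun z => d x z - d y z.
Proof. by apply/funext => z; rewrite /kuratowski /= opprB addrA subrK. Qed.

Lemma ann_kuratowski (h : X -> B) (x y : X) (c : B) :
  ann (kuratowski h x - kuratowski h y) c <-> c * d x y = 0.
Proof.
rewrite /ann kuratowski_sub scalrfctE.
change ((fun z => c * (d x z - d y z)) = 0 <-> c * d x y = 0); split.
- by move=> /(congr1 (fun f : X -> B^o => f y)) /=; rewrite metric_self subr0.
- move=> cd0; apply/funext => z /=.
  by rewrite -metric_sym_diff_le mulrCA cd0 mulr0.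
Qed.

Lemma kuratowski_ann_gen (h : X -> B) (x y : X) :
  ann_gen (kuratowski h x) (kuratowski h y) (1 - d x y).
Proof. exact/ann_gen_compl/ann_kuratowski. Qed.

(* Evaluating at y recovers d(x,y), so distinct points have distinct images. *)
Lemma kuratowski_inj (h : X -> B) : injective (kuratowski h).
Proof.
case: hd => dE _ x y /(congr1 (fun f : X -> B^o => f y)).
by rewrite /kuratowski metric_self => /addIr /dE.
Qed.

Lemma kuratowski_isometry (h : X -> B) :
  metrizable (kuratowski_image h) /\
  isometry_onto_modular d (kuratowski_image h) (kuratowski h).
Proof.
split; first by move=> _ _ [x <-] [y <-]; exists (1 - d x y); apply: kuratowski_ann_gen.
split; first by move=> x; exists x.
split; first exact: kuratowski_inj.
split; first by move=> m [x <-]; exists x.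
by move=> x y; rewrite (modular_metricE (kuratowski_ann_gen h x y)) opprB addrC subrK.
Qed.

End Embedding.

Theorem mainTheorem13 (B : comPzRingType) (X : Type) (d : X -> X -> B)
    (hB : boolean_ring B) (hd : boolean_metric d) :
  (exists (M : lmodType B) (S : M -> Prop) (g : X -> M),
      metrizable S /\ isometry_onto_modular d S g) /\
  (forall x0 : X,
      exists (M : lmodType B) (S : M -> Prop) (g : X -> M),
        metrizable S /\ S 0 /\ isometry_onto_modular d S g /\ g x0 = 0).
Proof.
split.
  by exists (X -> B^o), (kuratowski_image d 0), (kuratowski d 0);
    apply: kuratowski_isometry.
move=> x0; have x0_zero : kuratowski d (d x0) x0 = 0.
  by apply/funext => z; rewrite /kuratowski subrr.
have [metr iso] := kuratowski_isometry hB hd (d x0).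
exists (X -> B^o), (kuratowski_image d (d x0)), (kuratowski d (d x0)).
split; first exact: metr.
by split; first exists x0.
Qed.
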